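(* Let $(D,\sqsubseteq)$ be a dcpo with its Scott topology, $B\subseteq D$, $A\in\mathbf{\Delta}^0_2(D)$, and $0<\alpha<\aleph_1$. (1) If $A\in\mathbf{D}_\alpha(D)$, then there is no $\sqsubseteq$-increasing $(A,1)$-alternating $B$-tree of rank $\alpha$. (2) If $D$ is a continuous domain with basis $B$, the following are equivalent: (i) $A\in\mathbf{D}_\alpha(D)$; (ii) there is no $\sqsubseteq$-increasing $(A,1)$-alternating $B$-tree of rank $\alpha$; (iii) there is no $\ll$-increasing $(A,1)$-alternating $B$-tree of rank $\alpha$.
   Context: Dcpo: poset in which every nonempty directed set has a supremum; Scott topology: open sets are upsets $O$ such that every directed set with supremum in $O$ meets $O$. Way-below: $x\ll y$ iff for every directed $S$ with $y\sqsubseteq\sqcup S$ some $s\in S$ has $x\sqsubseteq s$. Continuous domain with basis $B$: for every $x$, $B\cap\{z:z\ll x\}$ is directed with supremum $x$. $\mathbf{\Sigma}^0_2(D)$: countable unions of differences of Scott open sets; $\mathbf{\Pi}^0_2(D)$: complements; $\mathbf{\Delta}^0_2(D)$: both. Parity: ordinal $\lambda+n$ ($\lambda$ zero or limit, $n<\omega$) has the parity of $n$; $\beta\sim\alpha$ means same parity. $D_\alpha((A_\beta)_{\beta<\alpha})=\bigcup_{\beta<\alpha,\beta\not\sim\alpha}(A_\beta\setminus\bigcup_{\gamma<\beta}A_\gamma)$; $\mathbf{D}_\alpha(D)$ is the class of such sets with all $A_\beta$ Scott open. Trees: a tree is a nonempty set of finite sequences (over some set) closed under prefixes, with root the empty sequence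 $\mathit{nil}$; well-founded means no infinite branch; for well-founded $T$, $\mathrm{rank}_T(\sigma)=\sup\{\mathrm{rank}_T(\sigma a)+1:\sigma a\in T\}$ (with $\sup\emptyset=0$), and the rank of $T$ is $\mathrm{rank}_T(\mathit{nil})$. A $B$-tree is a map $f:T\to B$ with $T$ a tree; its rank is that of $T$. It is $(A,\varepsilon)$-alternating if ($f(\mathit{nil})\in A$ iff $\varepsilon=1$) and $f(\sigma a)\in A\iff f(\sigma)\notin A$ for all $\sigma,\sigma a\in T$. For $\preceq\in\{\sqsubseteq,\ll\}$, $f$ is $\preceq$-increasing if $f(\sigma)\preceq f(\sigma a)$ for all $\sigma,\sigma a\in T$. *)

From Stdlib Require Import List Arith.
Import ListNotations.

(* Countable ordinals as Brouwer ordinals (every ordinal < aleph_1 has *)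
(* a representative; OL f denotes the supremum of the f n).            *)
Inductive Ord : Type :=
| OZ : Ord
| OS : Ord -> Ord
| OL : (nat -> Ord) -> Ord.

Inductive ole : Ord -> Ord -> Prop :=
| ole_Z y : ole OZ y
| ole_SS x y : ole x y -> ole (OS x) (OS y)
| ole_S_r x y : ole x y -> ole x (OS y)
| ole_lim_l f y : (forall n, ole (f n) y) -> ole (OL f) y
| ole_lim_r x f n : ole x (f n) -> ole x (OL f).

Definition olt (x y : Ord) : Prop := ole (OS x) y.
Definition oeq (x y : Ord) : Prop := ole x y /\ ole y x.

Definition lim0 (l : Ord) : Prop := forall g, olt g l -> olt (OS g) l.

Fixpoint oaddn (l : Ord) (n : nat) : Ord :=
  match n with 0 => l | S m => OS (oaddn l m) end.

(* parity: the ordinal lambda + n (lambda zero or limit) is odd iff n is odd *)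
Definition oodd (b : Ord) : Prop :=
  exists l n, lim0 l /\ oeq b (oaddn l n) /\ Nat.odd n = true.

Definition osim (b a : Ord) : Prop := oodd b <-> oodd a.

Section Order.
Context {D : Type} (le : D -> D -> Prop).

Definition directed (S : D -> Prop) : Prop :=
  (exists s, S s) /\
  forall x y, S x -> S y -> exists z, S z /\ le x z /\ le y z.

Definition is_sup (S : D -> Prop) (x : D) : Prop :=
  (forall s, S s -> le s x) /\ (forall u, (forall s, S s -> le s u) -> le x u).

Definition is_dcpo : Prop :=
  (forall x, le x x) /\
  (forall x y z, le x y -> le y z -> le x z) /\
  (forall x y, le x y -> le y x -> x = y) /\
  (forall S, directed S -> exists x, is_sup S x).

Definition scott_open (O : D -> Prop) : Prop :=
  (forall x y, O x -> le x y -> O y) /\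
  (forall S x, directed S -> is_sup S x -> O x -> exists s, S s /\ O s).

Definition way_below (x y : D) : Prop :=
  forall S, directed S -> (forall s, is_sup S s -> le y s) ->
    exists s, S s /\ le x s.

Definition continuous_domain (B : D -> Prop) : Prop :=
  is_dcpo /\
  forall x, directed (fun z => B z /\ way_below z x) /\
            is_sup (fun z => B z /\ way_below z x) x.

Definition Sigma02 (A : D -> Prop) : Prop :=
  exists U V : nat -> D -> Prop,
    (forall n, scott_open (U n)) /\ (forall n, scott_open (V n)) /\
    forall x, A x <-> exists n, U n x /\ ~ V n x.

Definition Pi02 (A : D -> Prop) : Prop := Sigma02 (fun x => ~ A x).

Definition Delta02 (A : D -> Prop) : Prop := Sigma02 A /\ Pi02 A.

Definition Dop (alpha : Ord) (Af : Ord -> D -> Prop) (x : D) : Prop :=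
  exists b, olt b alpha /\ ~ osim b alpha /\ Af b x /\
    ~ (exists g, olt g b /\ Af g x).

(* A in D_alpha(D): A = D_alpha((A_b)_{b<alpha}) with all A_b Scott open.
   Families are given as maps on representatives; they must respect
   equality of ordinals. *)
Definition in_Dalpha (alpha : Ord) (A : D -> Prop) : Prop :=
  exists Af : Ord -> D -> Prop,
    (forall b b', olt b alpha -> oeq b b' -> forall x, Af b x <-> Af b' x) /\
    (forall b, olt b alpha -> scott_open (Af b)) /\
    (forall x, A x <-> Dop alpha Af x).

End Order.

(* Trees: sets of finite sequences over X, sigma a := sigma ++ [a].    *)
Definition is_tree {X : Type} (T : list X -> Prop) : Prop :=
  (exists s, T s) /\ (forall s t, T (s ++ t) -> T s).

(* rank_le T s g : rank_T(s) <= g, where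
   rank_T(s) = sup { rank_T(s a) + 1 : s a in T }.  (Holds only when the
   subtree below s is well founded.) *)
Inductive rank_le {X : Type} (T : list X -> Prop) : list X -> Ord -> Prop :=
| rank_le_intro s g :
    (forall a, T (s ++ [a]) -> exists d, olt d g /\ rank_le T (s ++ [a]) d) ->
    rank_le T s g.

Definition has_rank {X : Type} (T : list X -> Prop) (alpha : Ord) : Prop :=
  rank_le T [] alpha /\ forall b, olt b alpha -> ~ rank_le T [] b.

Definition alternating {D X : Type} (T : list X -> Prop) (f : list X -> D)
  (A : D -> Prop) (eps : bool) : Prop :=
  (A (f []) <-> eps = true) /\
  forall s a, T s -> T (s ++ [a]) -> (A (f (s ++ [a])) <-> ~ A (f s)).

Definition increasing {D X : Type} (R : D -> D -> Prop) (T : list X -> Prop)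
  (f : list X -> D) : Prop :=
  forall s a, T s -> T (s ++ [a]) -> R (f s) (f (s ++ [a])).

Definition exists_alt_tree {D : Type} (R : D -> D -> Prop) (B A : D -> Prop)
  (alpha : Ord) : Prop :=
  exists (X : Type) (T : list X -> Prop) (f : list X -> D),
    is_tree T /\ (forall s, T s -> B (f s)) /\
    alternating T f A true /\ increasing R T f /\ has_rank T alpha.

(* Part (1): if open upsets A_beta define A, the least index of f(s) strictly
   decreases along an increasing alternating tree f: it cannot grow since the
   A_beta are upsets, and cannot stay equal since the parity of the least
   index decides membership in A.  So it bounds the rank of the tree.

   Part (2): the alternation rank of a point is the height of the alternating
   ⊑-chains of basis elements above it.  If there is no tree of rank alpha,
   every basis element in A has rank below alpha, for otherwise the canonical
   tree of such chains, labelled by decreasing ordinals, has rank alpha.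
   Raising ranks by at most one to the parity prescribed by A gives levels;
   the points with a basis element of level <= beta way below them form Scott
   open sets defining A, because a Delta^0_2 set is constant on intervals
   [c, y] with c way below y.  Finally a ⊑-increasing tree is refined to a
   ≪-increasing one by choosing basis elements way below its points, using
   interpolation. *)

From Stdlib Require Import List Arith Classical ClassicalEpsilon.
Import ListNotations.

Lemma ole_refl (x : Ord) : ole x x.
Proof.
  induction x as [| x IH | f IH].
  - constructor.
  - apply ole_SS, IH.
  - apply ole_lim_l. intro n. eapply ole_lim_r, IH.
Qed.

Lemma ole_xS (x : Ord) : ole x (OS x).
Proof. apply ole_S_r, ole_refl. Qed.

Lemma ole_OZ_any (x : Ord) : ole x OZ -> forall z, ole x z.
Proof.
  intro H. remember OZ as w. induction H; intros; try discriminate.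
  - constructor.
  - apply ole_lim_l. intro n. auto.
Qed.

Lemma ole_trans (x y z : Ord) : ole x y -> ole y z -> ole x z.
Proof.
  intros Hxy Hyz. revert x Hxy. induction Hyz as [z | y z _ IH | y z _ IH | f z _ IH | y f n _ IH].
  - intros x Hx. apply ole_OZ_any; assumption.
  - intros x Hx. remember (OS y) as w. induction Hx; try discriminate.
    + constructor.
    + injection Heqw as ->. apply ole_SS; auto.
    + injection Heqw as ->. apply ole_S_r; auto.
    + apply ole_lim_l. auto.
  - intros x Hx. apply ole_S_r; auto.
  - intros x Hx. remember (OL f) as w. induction Hx; try discriminate.
    + constructor.
    + apply ole_lim_l. auto.
    + injection Heqw as ->. eapply IH; eauto.
  - intros x Hx. eapply ole_lim_r. apply IH, Hx.
Qed.

Lemma ole_Sl (x y : Ord) : ole (OS x) y -> ole x y.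
Proof. intro H. eapply ole_trans; [apply ole_xS | exact H]. Qed.

Lemma ole_SS_inv (x y : Ord) : ole (OS x) (OS y) -> ole x y.
Proof. intro H. inversion H; subst; [assumption | apply ole_Sl; assumption]. Qed.

Lemma olt_ole (x y : Ord) : olt x y -> ole x y.
Proof. apply ole_Sl. Qed.

Lemma olt_ole_trans (x y z : Ord) : olt x y -> ole y z -> olt x z.
Proof. apply ole_trans. Qed.

Lemma ole_olt_trans (x y z : Ord) : ole x y -> olt y z -> olt x z.
Proof. intros Hxy Hyz. eapply ole_trans; [apply ole_SS, Hxy | exact Hyz]. Qed.

Lemma olt_wf : well_founded olt.
Proof.
  assert (Hacc : forall y x, olt x y -> Acc olt x).
  { induction y as [| y IH | f IH]; intros x H; unfold olt in H.
    - inversion H.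
    - apply ole_SS_inv in H. constructor. intros z Hz.
      apply IH. eapply olt_ole_trans; eassumption.
    - inversion H; subst. eapply IH; eassumption. }
  intro x. apply (Hacc (OS x)), ole_refl.
Qed.

Lemma olt_irrefl (x : Ord) : ~ olt x x.
Proof.
  induction (olt_wf x) as [x _ IH]. intro H. exact (IH x H H).
Qed.

Lemma ole_total (x y : Ord) : ole x y \/ olt y x.
Proof.
  unfold olt. revert y. induction x as [| x IHx | f IHf]; intro y.
  - left; constructor.
  - induction y as [| y _ | g IHg].
    + right. apply ole_SS. constructor.
    + destruct (IHx y); [left | right]; apply ole_SS; assumption.
    + destruct (classic (exists n, ole (OS x) (g n))) as [[n Hn] | Hn].
      * left. eapply ole_lim_r; eassumption.
      * right. apply ole_SS, ole_lim_l. intro n.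
        destruct (IHg n) as [H | H]; [exfalso; eauto | apply ole_SS_inv, H].
  - destruct (classic (forall n, ole (f n) y)) as [Hy | Hy].
    + left. apply ole_lim_l, Hy.
    + apply not_all_ex_not in Hy as [n Hn].
      destruct (IHf n y) as [H | H]; [contradiction | right; eapply ole_lim_r, H].
Qed.

Lemma not_olt_ole (x y : Ord) : ~ olt y x -> ole x y.
Proof. intro H. destruct (ole_total x y); [assumption | contradiction]. Qed.

Lemma ord_min (P : Ord -> Prop) (x : Ord) :
  P x -> exists m, P m /\ ole m x /\ forall y, olt y m -> ~ P y.
Proof.
  induction (olt_wf x) as [x _ IH]. intro Hx.
  destruct (classic (exists y, olt y x /\ P y)) as [[y [Hyx Hy]] | Hno].
  - destruct (IH y Hyx Hy) as [m [Hm [Hmy Hmin]]].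
    exists m. repeat split; [exact Hm | eapply ole_trans; [exact Hmy | apply olt_ole, Hyx] | exact Hmin].
  - exists x. repeat split; [exact Hx | apply ole_refl |]. intros y Hy Py. eauto.
Qed.

Lemma oeq_refl (x : Ord) : oeq x x.
Proof. split; apply ole_refl. Qed.

Lemma oeq_sym (x y : Ord) : oeq x y -> oeq y x.
Proof. unfold oeq; tauto. Qed.

Lemma oeq_trans (x y z : Ord) : oeq x y -> oeq y z -> oeq x z.
Proof. intros [] []; split; eapply ole_trans; eassumption. Qed.

Lemma oeq_S (x y : Ord) : oeq x y -> oeq (OS x) (OS y).
Proof. intros []; split; apply ole_SS; assumption. Qed.

Lemma oaddn_unique (l l' : Ord) (n n' : nat) :
  lim0 l -> lim0 l' -> oeq (oaddn l n) (oaddn l' n') -> n = n'.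
Proof.
  assert (Hnot_succ : forall l l' m, lim0 l -> ~ oeq l (oaddn l' (S m))).
  { intros l0 l0' m Hl [H1 H2]. apply (olt_irrefl (OS (oaddn l0' m))).
    eapply olt_ole_trans; [apply Hl, H2 | exact H1]. }
  revert l l' n'. induction n as [| n IH]; intros l l' [| n'] Hl Hl' H; simpl in H.
  - reflexivity.
  - exfalso. exact (Hnot_succ l l' n' Hl H).
  - exfalso. exact (Hnot_succ l' l n Hl' (oeq_sym _ _ H)).
  - f_equal. apply (IH l l' n' Hl Hl'). destruct H; split; apply ole_SS_inv; assumption.
Qed.

Lemma oaddn_exists (x : Ord) : exists l n, lim0 l /\ oeq x (oaddn l n).
Proof.
  induction (olt_wf x) as [x _ IH].
  destruct (classic (lim0 x)) as [Hx | Hx].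
  - exists x, 0. split; [exact Hx | apply oeq_refl].
  - unfold lim0 in Hx. apply not_all_ex_not in Hx as [h Hh].
    apply imply_to_and in Hh as [Hhx Hnot].
    destruct (IH h Hhx) as [l [n [Hl Heq]]].
    exists l, (S n). split; [exact Hl |].
    (* [x] is the successor of [h] *)
    apply oeq_trans with (OS h); [| apply oeq_S, Heq].
    split; [apply not_olt_ole, Hnot | exact Hhx].
Qed.

Lemma oodd_oeq (x y : Ord) : oeq x y -> oodd x -> oodd y.
Proof.
  intros H [l [n [Hl [He Ho]]]]. exists l, n.
  split; [exact Hl | split; [eapply oeq_trans; [apply oeq_sym, H | exact He] | exact Ho]].
Qed.

Lemma oodd_S (x : Ord) : oodd (OS x) <-> ~ oodd x.
Proof.
  destruct (oaddn_exists x) as [l [n [Hl He]]].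
  assert (HS : oeq (OS x) (oaddn l (S n))) by (apply oeq_S, He).
  split.
  - intros [l1 [n1 [Hl1 [He1 Ho1]]]] [l2 [n2 [Hl2 [He2 Ho2]]]].
    assert (n1 = S n) by exact (oaddn_unique l1 l n1 (S n) Hl1 Hl (oeq_trans _ _ _ (oeq_sym _ _ He1) HS)).
    assert (n2 = n) by exact (oaddn_unique l2 l n2 n Hl2 Hl (oeq_trans _ _ _ (oeq_sym _ _ He2) He)).
    subst. rewrite Nat.odd_succ, <- Nat.negb_odd, Ho2 in Ho1. discriminate.
  - intro Hn. exists l, (S n). split; [exact Hl | split; [exact HS |]].
    rewrite Nat.odd_succ, <- Nat.negb_odd.
    destruct (Nat.odd n) eqn:E; [| reflexivity].
    exfalso. apply Hn. exists l, n. auto.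
Qed.

Lemma osim_oeq (x y z : Ord) : oeq x y -> (osim x z <-> osim y z).
Proof.
  unfold osim. intro H.
  pose proof (oodd_oeq _ _ H). pose proof (oodd_oeq _ _ (oeq_sym _ _ H)). tauto.
Qed.

Lemma osim_S (x z : Ord) : osim (OS x) z <-> ~ osim x z.
Proof. unfold osim. rewrite oodd_S. tauto. Qed.

Lemma parity_adjust (alpha g : Ord) (P : Prop) :
  exists e, ole g e /\ ole e (OS g) /\ (P <-> ~ osim e alpha).
Proof.
  destruct (classic (P <-> ~ osim g alpha)) as [Hg | Hg].
  - exists g. split; [apply ole_refl | split; [apply ole_xS | exact Hg]].
  - exists (OS g). split; [apply ole_xS | split; [apply ole_refl |]].
    rewrite osim_S. tauto.
Qed.

Section DifferenceHierarchy.
Context {D : Type}.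
Variables (alpha : Ord) (Af : Ord -> D -> Prop) (A : D -> Prop).

(* [beta] is the least index of a member of the family containing [x];
   [Dop alpha Af x] says exactly that such a least index lies below [alpha]
   and has parity opposite to [alpha]. *)
Definition least_index (beta : Ord) (x : D) : Prop :=
  Af beta x /\ ~ (exists g, olt g beta /\ Af g x).

Lemma least_index_exists (beta : Ord) (x : D) :
  Af beta x -> exists m, ole m beta /\ least_index m x.
Proof.
  intro H. destruct (ord_min (fun g => Af g x) beta H) as [m [Hm [Hmb Hmin]]].
  exists m. split; [exact Hmb |]. split; [exact Hm |]. intros [g [Hg Hgx]]. exact (Hmin g Hg Hgx).
Qed.

Lemma least_index_unique (beta beta' : Ord) (x : D) :
  least_index beta x -> least_index beta' x -> oeq beta beta'.
Proof.
  intros [H1 Hmin] [H1' Hmin'].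
  split; apply not_olt_ole; intro Hlt; [apply Hmin | apply Hmin']; eauto.
Qed.

Lemma Dop_parity (HAf : forall x, A x <-> Dop alpha Af x) (beta : Ord) (x : D) :
  least_index beta x -> olt beta alpha -> (A x <-> ~ osim beta alpha).
Proof.
  intros Hl Hlt. rewrite HAf. split.
  - intros [b [_ [Hb Hlb]]]. rewrite (osim_oeq _ _ _ (least_index_unique _ _ _ Hl Hlb)). exact Hb.
  - intro Hb. exists beta. split; [exact Hlt | split; [exact Hb | exact Hl]].
Qed.

Lemma parity_Dop
  (Hpar : forall beta x, least_index beta x -> olt beta alpha -> (A x <-> ~ osim beta alpha))
  (Hcov : forall x, A x -> exists beta, olt beta alpha /\ Af beta x) :
  forall x, A x <-> Dop alpha Af x.
Proof.
  intro x. split.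
  - intro Ax. destruct (Hcov x Ax) as [beta [Hlt Hbx]].
    destruct (least_index_exists beta x Hbx) as [m [Hmb Hm]].
    assert (Hma : olt m alpha) by (eapply ole_olt_trans; eassumption).
    exists m. split; [exact Hma | split; [apply (Hpar m x Hm Hma), Ax | exact Hm]].
  - intros [b [Hlt [Hb Hl]]]. apply (Hpar b x Hl Hlt), Hb.
Qed.

End DifferenceHierarchy.

Section NoTreeInDalpha.
Variables (D : Type) (le : D -> D -> Prop) (alpha : Ord) (Af : Ord -> D -> Prop) (A : D -> Prop).
Hypothesis HAf : forall x, A x <-> Dop alpha Af x.
Hypothesis Hup : forall beta x y, olt beta alpha -> Af beta x -> le x y -> Af beta y.

(* Along an increasing alternating tree the least index strictly decreases:
   it cannot increase since the family members are upsets, and cannot stay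
   equal since the parity would then not alternate.  Hence it bounds the rank. *)
Lemma rank_le_least_index (X : Type) (T : list X -> Prop) (f : list X -> D)
  (Halt : forall s a, T s -> T (s ++ [a]) -> (A (f (s ++ [a])) <-> ~ A (f s)))
  (Hinc : increasing le T f) :
  forall beta s, T s -> least_index Af beta (f s) -> olt beta alpha -> rank_le T s beta.
Proof.
  intro beta. induction (olt_wf beta) as [beta _ IH]. intros s Ts Hl Hlt.
  constructor. intros a Ta.
  destruct (least_index_exists Af beta (f (s ++ [a]))) as [b [Hbb Hb]].
  { apply (Hup beta (f s)); [exact Hlt | apply Hl | apply Hinc; assumption]. }
  assert (Hba : olt b alpha) by (eapply ole_olt_trans; eassumption).
  assert (Hbl : olt b beta).
  { apply NNPP. intro Hnlt.
    assert (Heq : oeq b beta) by (split; [exact Hbb | apply not_olt_ole, Hnlt]).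
    pose proof (Dop_parity alpha Af A HAf beta (f s) Hl Hlt) as Hs.
    pose proof (Dop_parity alpha Af A HAf b (f (s ++ [a])) Hb Hba) as Hsa.
    rewrite (osim_oeq _ _ _ Heq) in Hsa. pose proof (Halt s a Ts Ta). tauto. }
  exists b. split; [exact Hbl | apply IH; assumption].
Qed.

End NoTreeInDalpha.

Lemma Dalpha_no_tree (D : Type) (le : D -> D -> Prop) (B A : D -> Prop) (alpha : Ord) :
  in_Dalpha le alpha A -> ~ exists_alt_tree le B A alpha.
Proof.
  intros [Af [_ [Hopen HAf]]] [X [T [f [Htree [_ [[Hroot Halt] [Hinc [_ Hrank]]]]]]]].
  assert (T0 : T []) by (destruct Htree as [[s Hs] Hpre]; exact (Hpre [] s Hs)).
  (* the root lies in A, so its least index is below alpha and bounds the rank *)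
  destruct (proj1 (HAf (f [])) (proj2 Hroot eq_refl)) as [b [Hba [_ Hb]]].
  apply (Hrank b Hba).
  apply (rank_le_least_index D le alpha Af A HAf) with (f := f); try assumption.
  intros beta x y Hlt. apply (proj1 (Hopen beta Hlt)).
Qed.

Section WayBelow.
Context {D : Type}.
Variable le : D -> D -> Prop.
Hypothesis Hd : is_dcpo le.

Lemma wb_le (x y : D) : way_below le x y -> le x y.
Proof.
  intro H. destruct Hd as [Hrefl _].
  destruct (H (fun z => z = y)) as [s [-> Hs]]; [| | exact Hs].
  - split; [exists y; reflexivity |]. intros a b -> ->. exists y; auto.
  - intros s [Hs _]. apply Hs. reflexivity.
Qed.

Lemma wb_le_trans (x y z : D) : way_below le x y -> le y z -> way_below le x z.
Proof.
  intros H Hyz S HS Hsup. apply H; [exact HS |].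
  intros s Hs. destruct Hd as [_ [Htrans _]]. eapply Htrans; [exact Hyz | apply Hsup, Hs].
Qed.

Lemma le_wb_trans (x y z : D) : le x y -> way_below le y z -> way_below le x z.
Proof.
  intros Hxy H S HS Hsup. destruct (H S HS Hsup) as [s [Ss Hys]].
  exists s. split; [exact Ss |]. destruct Hd as [_ [Htrans _]]. eapply Htrans; eassumption.
Qed.

End WayBelow.

Lemma wb_sup {D : Type} (le : D -> D -> Prop) (b x : D) (S : D -> Prop) :
  way_below le b x -> directed le S -> is_sup le S x -> exists s, S s /\ le b s.
Proof.
  intros H HS Hx. apply H; [exact HS |]. intros s Hs. apply (proj2 Hx), (proj1 Hs).
Qed.

Section ContinuousDomain.
Context {D : Type}.
Variables (le : D -> D -> Prop) (B : D -> Prop).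
Hypothesis Hc : continuous_domain le B.

Let Hd : is_dcpo le := proj1 Hc.

Definition double_approx (x d : D) : Prop :=
  B d /\ exists c, B c /\ way_below le d c /\ way_below le c x.

Lemma double_approx_directed (x : D) : directed le (double_approx x).
Proof.
  pose proof (proj2 Hc) as Happ. pose proof (proj1 (proj2 Hd)) as Htrans. split.
  - destruct (Happ x) as [[[c [Bc Hcx]] _] _].
    destruct (Happ c) as [[[d [Bd Hdc]] _] _].
    exists d. split; [exact Bd | exists c; auto].
  - intros d1 d2 [_ [c1 [Bc1 [H1 H1']]]] [_ [c2 [Bc2 [H2 H2']]]].
    (* join c1 and c2 below x, then join the approximants of d1 and d2 below it *)
    destruct (proj2 (proj1 (Happ x)) c1 c2) as [c3 [[Bc3 Hc3] [Hl1 Hl2]]]; [auto | auto |].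
    destruct (Happ c3) as [Hdir3 Hsup3].
    destruct (wb_sup le d1 c3 _ (wb_le_trans le Hd _ _ _ H1 Hl1) Hdir3 Hsup3) as [e1 [[Be1 He1] Hle1]].
    destruct (wb_sup le d2 c3 _ (wb_le_trans le Hd _ _ _ H2 Hl2) Hdir3 Hsup3) as [e2 [[Be2 He2] Hle2]].
    destruct (proj2 Hdir3 e1 e2) as [e [[Be He] [Hee1 Hee2]]]; [auto | auto |].
    exists e. split; [split; [exact Be | exists c3; auto] |].
    split; eapply Htrans; eassumption.
Qed.

Lemma double_approx_sup (x : D) : is_sup le (double_approx x) x.
Proof.
  pose proof (proj2 Hc) as Happ. pose proof (proj1 (proj2 Hd)) as Htrans. split.
  - intros d [_ [c [_ [H1 H2]]]]. eapply Htrans; apply (wb_le le Hd); eassumption.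
  - intros u Hu. apply (proj2 (proj2 (Happ x))). intros c [Bc Hcx].
    apply (proj2 (proj2 (Happ c))). intros d [Bd Hdc].
    apply Hu. split; [exact Bd | exists c; auto].
Qed.

Lemma interpolation (b x : D) :
  way_below le b x -> exists c, B c /\ way_below le b c /\ way_below le c x.
Proof.
  intro Hb.
  destruct (wb_sup le b x _ Hb (double_approx_directed x) (double_approx_sup x))
    as [s [[_ [c [Bc [Hsc Hcx]]]] Hbs]].
  exists c. split; [exact Bc | split; [eapply le_wb_trans; eassumption | exact Hcx]].
Qed.

Lemma way_above_open (W : D -> Prop) :
  scott_open le (fun x => exists b, W b /\ way_below le b x).
Proof.
  split.
  - intros x y [b [Wb Hbx]] Hxy. exists b. split; [exact Wb | eapply wb_le_trans; eassumption].
  - intros S x HS Hsup [b [Wb Hbx]].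
    destruct (interpolation b x Hbx) as [c [_ [Hbc Hcx]]].
    destruct (wb_sup le c x S Hcx HS Hsup) as [s [Ss Hcs]].
    exists s. split; [exact Ss | exists b; split; [exact Wb | eapply wb_le_trans; eassumption]].
Qed.

Lemma sigma02_robust (P : D -> Prop) (y : D) :
  Sigma02 le P -> P y ->
  exists c, B c /\ way_below le c y /\ forall e, le c e -> le e y -> P e.
Proof.
  intros [U [V [HU [HV HP]]]] Py.
  destruct (proj1 (HP y) Py) as [n [Un Vn]].
  destruct (proj2 Hc y) as [Hdir Hsup].
  destruct (proj2 (HU n) _ _ Hdir Hsup Un) as [c [[Bc Hcy] Uc]].
  exists c. split; [exact Bc | split; [exact Hcy |]]. intros e Hce Hey.
  apply HP. exists n. split.
  - eapply (proj1 (HU n)); eassumption.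
  - intro Ve. apply Vn. eapply (proj1 (HV n)); eassumption.
Qed.

Variable A : D -> Prop.
Hypothesis HA : Delta02 le A.

Lemma delta02_robust (y : D) :
  exists c, B c /\ way_below le c y /\ forall e, le c e -> le e y -> (A e <-> A y).
Proof.
  destruct HA as [HS HP]. destruct (classic (A y)) as [Ay | Ay].
  - destruct (sigma02_robust A y HS Ay) as [c [Bc [Hcy Hc']]].
    exists c. split; [exact Bc | split; [exact Hcy |]]. intros e He1 He2. split; auto.
  - destruct (sigma02_robust _ y HP Ay) as [c [Bc [Hcy Hc']]].
    exists c. split; [exact Bc | split; [exact Hcy |]]. intros e He1 He2.
    split; [intro Ae; exfalso; exact (Hc' e He1 He2 Ae) | contradiction].
Qed.

Lemma delta02_robust_above (b y : D) :
  B b -> way_below le b y -> exists d, B d /\ way_below le d y /\ le b d /\ (A d <-> A y).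
Proof.
  intros Bb Hby. destruct (delta02_robust y) as [c [Bc [Hcy Hr]]].
  destruct (proj2 (proj1 (proj2 Hc y)) b c) as [d [[Bd Hdy] [Hbd Hcd]]]; [auto | auto |].
  exists d. repeat split; try assumption; apply Hr; try assumption; apply (wb_le le Hd), Hdy.
Qed.

Lemma approx_between (p y : D) :
  way_below le p y -> exists d, B d /\ way_below le p d /\ way_below le d y /\ (A d <-> A y).
Proof.
  intro Hpy. destruct (interpolation p y Hpy) as [c [Bc [Hpc Hcy]]].
  destruct (delta02_robust_above c y Bc Hcy) as [d [Bd [Hdy [Hcd Had]]]].
  exists d. split; [exact Bd | split; [eapply wb_le_trans; eassumption | auto]].
Qed.

End ContinuousDomain.

Section AlternationRank.
Context {D : Type}.
Variables (le : D -> D -> Prop) (B A : D -> Prop).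

(* [drank_le x g]: every basis element above [x] with the opposite
   [A]-membership has alternation rank below [g]; i.e. increasing alternating
   chains of basis elements starting above [x] have height at most [g]. *)
Inductive drank_le : D -> Ord -> Prop :=
| drank_le_intro x g :
    (forall d, B d -> le x d -> (A d <-> ~ A x) -> exists e, olt e g /\ drank_le d e) ->
    drank_le x g.

Lemma not_drank_le (x : D) (g : Ord) :
  ~ drank_le x g ->
  exists d, B d /\ le x d /\ (A d <-> ~ A x) /\ forall e, olt e g -> ~ drank_le d e.
Proof.
  intro Hn. apply NNPP. intro Hno. apply Hn. constructor. intros d Bd Hxd Had.
  apply NNPP. intro Hd. apply Hno. exists d.
  split; [exact Bd | split; [exact Hxd | split; [exact Had |]]].
  intros e He Hde. apply Hd. exists e. split; assumption.
Qed.

(* The canonical tree of a basis element [b] in [A] whose alternation rank is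
   not below [alpha]: nodes are finite alternating increasing chains of basis
   elements above [b], each labelled by an ordinal that strictly decreases
   (starting from [alpha] at the root) and stays below the point's rank. *)
Section CanonicalTree.
Variables (b : D) (alpha : Ord).
Hypotheses (Bb : B b) (Ab : A b).
Hypothesis Hroot : forall e, olt e alpha -> ~ drank_le b e.

Definition canon_step (x : D) (g : Ord) (p : D * Ord) : Prop :=
  B (fst p) /\ le x (fst p) /\ (A (fst p) <-> ~ A x) /\ olt (snd p) g /\
  forall e, olt e (snd p) -> ~ drank_le (fst p) e.

Definition canon_tip (s : list (D * Ord)) : D * Ord := last s (b, alpha).

Inductive canon_node : list (D * Ord) -> Prop :=
| canon_nil : canon_node []
| canon_snoc s p :
    canon_node s -> canon_step (fst (canon_tip s)) (snd (canon_tip s)) p -> canon_node (s ++ [p]).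

Lemma canon_tip_snoc (s : list (D * Ord)) (p : D * Ord) : canon_tip (s ++ [p]) = p.
Proof. apply last_last. Qed.

Lemma canon_node_snoc (s : list (D * Ord)) (p : D * Ord) :
  canon_node (s ++ [p]) <-> canon_node s /\ canon_step (fst (canon_tip s)) (snd (canon_tip s)) p.
Proof.
  split; [| intros []; constructor; assumption].
  intro H. inversion H as [Hnil | s' p' Hs' Hstep Heq].
  - exfalso. exact (app_cons_not_nil s [] p Hnil).
  - apply app_inj_tail in Heq as [-> ->]. split; assumption.
Qed.

Lemma canon_node_prefix (s t : list (D * Ord)) : canon_node (s ++ t) -> canon_node s.
Proof.
  induction t as [| p t IH] using rev_ind; intro H.
  - rewrite app_nil_r in H. exact H.
  - rewrite app_assoc in H. apply IH, (proj1 (proj1 (canon_node_snoc _ _) H)).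
Qed.

Lemma canon_tip_rank (s : list (D * Ord)) :
  canon_node s -> forall e, olt e (snd (canon_tip s)) -> ~ drank_le (fst (canon_tip s)) e.
Proof.
  intro H. destruct H as [| s p _ Hstep].
  - exact Hroot.
  - rewrite canon_tip_snoc. apply Hstep.
Qed.

(* Labels strictly decrease, so they bound the tree rank... *)
Lemma canon_rank_le (g : Ord) (s : list (D * Ord)) :
  canon_node s -> snd (canon_tip s) = g -> rank_le canon_node s g.
Proof.
  revert s. induction (olt_wf g) as [g _ IH]. intros s Hs Hg.
  constructor. intros p Hp. exists (snd p).
  destruct (proj2 (proj1 (canon_node_snoc s p) Hp)) as [_ [_ [_ [Hlt _]]]].
  rewrite Hg in Hlt. split; [exact Hlt |].
  apply IH; [exact Hlt | exact Hp | rewrite canon_tip_snoc; reflexivity].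
Qed.

(* ... and, by the invariant, every label is attained. *)
Lemma canon_rank_ge (g : Ord) (s : list (D * Ord)) :
  canon_node s -> snd (canon_tip s) = g -> forall e, olt e g -> ~ rank_le canon_node s e.
Proof.
  revert s. induction (olt_wf g) as [g _ IH]. intros s Hs Hg e He Hrank.
  assert (Htip := canon_tip_rank s Hs e). rewrite Hg in Htip.
  destruct (not_drank_le _ _ (Htip He)) as [d [Bd [Hle [Had Hd]]]].
  assert (Hchild : canon_node (s ++ [(d, e)])).
  { constructor; [exact Hs |]. rewrite Hg.
    split; [exact Bd | split; [exact Hle | split; [exact Had | split; [exact He | exact Hd]]]]. }
  inversion Hrank as [s0 e0 Hsucc]; subst s0 e0.
  destruct (Hsucc (d, e) Hchild) as [e'' [He'' Hr'']].
  apply (IH e He (s ++ [(d, e)]) Hchild (f_equal snd (canon_tip_snoc _ _)) e'' He'' Hr'').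
Qed.

Lemma canonical_tree : exists_alt_tree le B A alpha.
Proof.
  exists (D * Ord)%type, canon_node, (fun s => fst (canon_tip s)).
  split; [| split; [| split; [| split]]].
  - split; [exists []; constructor |]. apply canon_node_prefix.
  - intros s Hs. destruct Hs as [| s p _ Hstep]; [exact Bb |].
    rewrite canon_tip_snoc. apply Hstep.
  - split; [simpl; tauto |].
    intros s p _ Hp. rewrite canon_tip_snoc. apply (proj2 (proj1 (canon_node_snoc s p) Hp)).
  - intros s p _ Hp. rewrite canon_tip_snoc. apply (proj2 (proj1 (canon_node_snoc s p) Hp)).
  - split; [apply canon_rank_le | apply canon_rank_ge]; first [constructor | reflexivity].
Qed.

End CanonicalTree.

Lemma drank_lt_of_no_tree (alpha : Ord) (b : D) :
  ~ exists_alt_tree le B A alpha -> B b -> A b -> exists g, olt g alpha /\ drank_le b g.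
Proof.
  intros Hno Bb Ab. apply NNPP. intro Hn. apply Hno.
  apply (canonical_tree b alpha Bb Ab). intros e He Hr. apply Hn. exists e. split; assumption.
Qed.

End AlternationRank.

Fixpoint rev_trace {X Y Z : Type} (r0 : Y) (step : Y -> Z -> Y) (f : list X -> Z)
  (r : list X) : Y :=
  match r with
  | [] => r0
  | a :: r' => step (rev_trace r0 step f r') (f (rev (a :: r')))
  end.

Definition trace {X Y Z : Type} (r0 : Y) (step : Y -> Z -> Y) (f : list X -> Z)
  (s : list X) : Y := rev_trace r0 step f (rev s).

Lemma trace_snoc {X Y Z : Type} (r0 : Y) (step : Y -> Z -> Y) (f : list X -> Z)
  (s : list X) (a : X) :
  trace r0 step f (s ++ [a]) = step (trace r0 step f s) (f (s ++ [a])).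
Proof. unfold trace. rewrite rev_unit. simpl. rewrite rev_involutive. reflexivity. Qed.

Lemma exists_alt_tree_mono {D : Type} (R R' : D -> D -> Prop) (B A : D -> Prop) (alpha : Ord) :
  (forall x y, R x y -> R' x y) -> exists_alt_tree R B A alpha -> exists_alt_tree R' B A alpha.
Proof.
  intros HR [X [T [f [Htree [HB [Halt [Hinc Hrank]]]]]]].
  exists X, T, f. split; [exact Htree | split; [exact HB | split; [exact Halt | split; [| exact Hrank]]]].
  intros s a Ts Ta. apply HR, Hinc; assumption.
Qed.

Section Characterization.
Context {D : Type}.
Variables (le : D -> D -> Prop) (B A : D -> Prop).
Hypothesis Hc : continuous_domain le B.
Hypothesis HA : Delta02 le A.

Let Hd : is_dcpo le := proj1 Hc.

Lemma basis_approx_same (y : D) : exists c, B c /\ way_below le c y /\ (A c <-> A y).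
Proof.
  destruct (delta02_robust le B Hc A HA y) as [c [Bc [Hcy Hr]]].
  exists c. split; [exact Bc | split; [exact Hcy |]].
  apply Hr; [apply (proj1 Hd) | apply (wb_le le Hd), Hcy].
Qed.

Lemma drank_le_mono (x y : D) (g : Ord) :
  drank_le le B A x g -> le x y -> (A x <-> A y) -> drank_le le B A y g.
Proof.
  intros [? ? Hsucc] Hxy Hxy'. constructor. intros d Bd Hyd Had.
  apply Hsucc; [exact Bd | eapply (proj1 (proj2 Hd)); eassumption | rewrite Hxy'; exact Had].
Qed.

Lemma le_tree_wb_tree (alpha : Ord) :
  exists_alt_tree le B A alpha -> exists_alt_tree (way_below le) B A alpha.
Proof.
  intros [X [T [f [Htree [HB [[Hroot Halt] [Hinc Hrank]]]]]]].
  assert (Hpre : forall s a, T (s ++ [a]) -> T s) by (intros s a; apply (proj2 Htree)).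
  assert (T0 : T []) by (destruct Htree as [[s Hs] Hp]; exact (Hp [] s Hs)).
  set (root := epsilon (inhabits (f []))
                 (fun d => B d /\ way_below le d (f []) /\ (A d <-> A (f [])))).
  set (step := fun p y => epsilon (inhabits y)
                 (fun d => B d /\ way_below le p d /\ way_below le d y /\ (A d <-> A y))).
  assert (Hroot_spec : B root /\ way_below le root (f []) /\ (A root <-> A (f []))).
  { apply epsilon_spec, basis_approx_same. }
  assert (Hstep_spec : forall p y, way_below le p y ->
            B (step p y) /\ way_below le p (step p y) /\ way_below le (step p y) y /\
            (A (step p y) <-> A y)).
  { intros p y Hpy. apply epsilon_spec, (approx_between le B Hc A HA p y Hpy). }
  set (g := trace root step f).
  assert (g_snoc : forall s a, g (s ++ [a]) = step (g s) (f (s ++ [a]))) by apply trace_snoc.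
  assert (Hparent : forall s a, T (s ++ [a]) -> way_below le (g s) (f s) ->
            way_below le (g s) (f (s ++ [a]))).
  { intros s a Ta Hgs. eapply wb_le_trans; [exact Hd | exact Hgs | apply Hinc; [eapply Hpre |]; eassumption]. }
  assert (Hinv : forall s, T s -> B (g s) /\ way_below le (g s) (f s) /\ (A (g s) <-> A (f s))).
  { intro s. induction s as [| a s IH] using rev_ind; intro Ts; [exact Hroot_spec |].
    rewrite g_snoc. destruct (Hstep_spec _ _ (Hparent s a Ts (proj1 (proj2 (IH (Hpre _ _ Ts))))))
      as [Bst [_ Hst]].
    split; [exact Bst | exact Hst]. }
  exists X, T, g. split; [exact Htree | split; [| split; [split | split]]].
  - intros s Ts. apply (Hinv s Ts).
  - rewrite (proj2 (proj2 (Hinv [] T0))). exact Hroot.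
  - intros s a Ts Ta. rewrite (proj2 (proj2 (Hinv _ Ta))), (proj2 (proj2 (Hinv _ Ts))).
    apply Halt; assumption.
  - intros s a Ts Ta. rewrite g_snoc. apply Hstep_spec, Hparent; [exact Ta | apply (Hinv s Ts)].
  - exact Hrank.
Qed.

Section LevelFamily.
Variable alpha : Ord.

(* [e] is a level for a point of alternation rank [g] and [A]-membership [P]:
   [g] or its successor, whichever has the parity that [Dop] assigns to [P]. *)
Definition level (P : Prop) (g e : Ord) : Prop :=
  ole g e /\ ole e (OS g) /\ (P <-> ~ osim e alpha).

Definition basis_level (beta : Ord) (b : D) : Prop :=
  B b /\ exists g e, drank_le le B A b g /\ level (A b) g e /\ ole e beta.

Definition level_family (beta : Ord) (x : D) : Prop :=
  exists b, basis_level beta b /\ way_below le b x.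

Lemma refine_witness (b y : D) (g e : Ord) :
  B b -> way_below le b y -> drank_le le B A b g -> level (A b) g e ->
  exists d e', way_below le d y /\ ole e' e /\ basis_level e' d /\ (A y <-> ~ osim e' alpha).
Proof.
  intros Bb Hby Hrk [Hge [HeS Hpar]].
  destruct (delta02_robust_above le B Hc A HA b y Bb Hby) as [d [Bd [Hdy [Hbd Had]]]].
  destruct (classic (A d <-> A b)) as [Hsame | Hdiff].
  - (* [d] keeps the rank bound and the level of [b] *)
    exists d, e. split; [exact Hdy | split; [apply ole_refl |]].
    split; [| rewrite <- Had, Hsame; exact Hpar].
    split; [exact Bd |]. exists g, e.
    split; [apply (drank_le_mono b); [exact Hrk | exact Hbd | rewrite Hsame; tauto] |].
    split; [split; [exact Hge | split; [exact HeS | rewrite Hsame; exact Hpar]] | apply ole_refl].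
  - (* [d] alternates with [b], so its rank is strictly smaller *)
    destruct Hrk as [? ? Hsucc].
    destruct (Hsucc d Bd Hbd ltac:(tauto)) as [g' [Hg' Hrk']].
    destruct (parity_adjust alpha g' (A d)) as [e' [Hge' [HeS' Hpar']]].
    exists d, e'. split; [exact Hdy |].
    split; [eapply ole_trans; [exact HeS' | eapply ole_trans; [exact Hg' | exact Hge]] |].
    split; [| rewrite <- Had; exact Hpar'].
    split; [exact Bd |]. exists g', e'.
    split; [exact Hrk' | split; [split; [exact Hge' | split; [exact HeS' | exact Hpar']] | apply ole_refl]].
Qed.

Lemma level_family_open (beta : Ord) : scott_open le (level_family beta).
Proof. apply (way_above_open le B Hc). Qed.

Lemma level_family_oeq (beta beta' : Ord) (x : D) :
  oeq beta beta' -> (level_family beta x <-> level_family beta' x).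
Proof.
  intros [H1 H2]. unfold level_family, basis_level.
  split; intros [b [[Bb [g [e [Hrk [Hlev Hle]]]]] Hbx]];
    exists b; (split; [split; [exact Bb | exists g, e] | exact Hbx]);
    (split; [exact Hrk | split; [exact Hlev | eapply ole_trans; eassumption]]).
Qed.

Lemma least_level_parity (beta : Ord) (x : D) :
  least_index level_family beta x -> (A x <-> ~ osim beta alpha).
Proof.
  intros [[b [[Bb [g [e [Hrk [Hlev Heb]]]]] Hbx]] Hmin].
  destruct (refine_witness b x g e Bb Hbx Hrk Hlev) as [d [e' [Hdx [He'e [Hdlev Hpar]]]]].
  assert (Heq : oeq beta e').
  { split; [apply not_olt_ole; intro Hlt; apply Hmin; exists e'; split; [exact Hlt | exists d; split; assumption] |].
    eapply ole_trans; eassumption. }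
  rewrite (osim_oeq _ _ _ Heq). exact Hpar.
Qed.

Lemma level_family_covers (x : D) :
  ~ exists_alt_tree le B A alpha -> A x -> exists beta, olt beta alpha /\ level_family beta x.
Proof.
  intros Hno Ax. destruct (basis_approx_same x) as [c [Bc [Hcx Hcsame]]].
  assert (Ac : A c) by (apply Hcsame, Ax).
  destruct (drank_lt_of_no_tree le B A alpha c Hno Bc Ac) as [g [Hga Hrk]].
  destruct (parity_adjust alpha g (A c)) as [e [Hge [HeS Hpar]]].
  exists e. split.
  - (* [e <= g + 1 <= alpha], and [e] cannot be [alpha] since it has the wrong parity *)
    apply NNPP. intro Hnlt.
    assert (Heq : oeq e alpha) by (split; [eapply ole_trans; eassumption | apply not_olt_ole, Hnlt]).
    apply (proj1 Hpar Ac). rewrite (osim_oeq _ _ _ Heq). unfold osim. tauto.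
  - exists c. split; [| exact Hcx]. split; [exact Bc |]. exists g, e.
    split; [exact Hrk | split; [split; [exact Hge | split; [exact HeS | exact Hpar]] | apply ole_refl]].
Qed.

Lemma no_tree_Dalpha : ~ exists_alt_tree le B A alpha -> in_Dalpha le alpha A.
Proof.
  intro Hno. exists level_family. split; [| split].
  - intros b b' _ Heq x. apply level_family_oeq, Heq.
  - intros beta _. apply level_family_open.
  - apply parity_Dop.
    + intros beta x Hl _. apply least_level_parity, Hl.
    + intros x Ax. apply level_family_covers; assumption.
Qed.

End LevelFamily.

End Characterization.

Theorem theorem4p7 (D : Type) (le : D -> D -> Prop) (Hdcpo : is_dcpo le)
  (B A : D -> Prop) (HA : Delta02 le A) (alpha : Ord) (Halpha : olt OZ alpha) :
  (in_Dalpha le alpha A -> ~ exists_alt_tree le B A alpha) /\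
  (continuous_domain le B ->
     (in_Dalpha le alpha A <-> ~ exists_alt_tree le B A alpha) /\
     (~ exists_alt_tree le B A alpha <-> ~ exists_alt_tree (way_below le) B A alpha)).
Proof.
  split; [apply Dalpha_no_tree |].
  intro Hc. split.
  -
    split; [apply Dalpha_no_tree | apply (no_tree_Dalpha le B A Hc HA)].
  - (* (ii) <-> (iii): a ≪-increasing tree is ⊑-increasing, and conversely
       every ⊑-increasing tree can be refined to a ≪-increasing one *)
    split; intros Hno Htree; apply Hno.
    + apply (exists_alt_tree_mono (way_below le)); [apply (wb_le le Hdcpo) | exact Htree].
    + apply (le_tree_wb_tree le B A Hc HA), Htree.
Qed.
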